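(* The bi-immune symmetric group $G_{\mathfrak{B}}$ is closed in $(\mathrm{Sym}(\mathbb{N}), d)$ if and only if $G_{\mathfrak{B}} = \mathrm{Sym}(\mathbb{N})$.
   Context: $\mathbb{N}$ denotes the non-negative integers, and $\mathrm{Sym}(\mathbb{N})$ the group of all permutations of $\mathbb{N}$ under composition ($g \circ f$ means apply $f$ first). For $\sigma, \tau \in \mathrm{Sym}(\mathbb{N})$ let $\rho(\sigma,\tau) = 0$ if $\sigma = \tau$, and otherwise $\rho(\sigma,\tau) = 2^{-j}$ where $j$ is the least $i$ with $\sigma(i) \neq \tau(i)$; set $d(\sigma,\tau) = \max\{\rho(\sigma,\tau), \rho(\sigma^{-1},\tau^{-1})\}$, a complete metric inducing the pointwise convergence topology. For $i \in \mathbb{N}$, $\sigma_{(i)}$ is the permutation swapping $i$ and $i+1$ and fixing all other numbers. For $A \subseteq \mathbb{N}$ with increasing enumeration $a_0 < a_1 < \cdots$, define $\sigma_A(x) = \lim_{n \to \infty} (\sigma_{(a_0)} \circ \sigma_{(a_1)} \circ \cdots \circ \sigma_{(a_n)})(x)$ (eventually constant for each $x$). A set $A$ is immune if it is infinite and contains no infinite computably enumerable subset; $A$ is bi-immune if both $A$ and $\mathbb{N} - A$ are immune. For bi-immune $A$, $\sigma_A$ is a permutation of $\mathbb{N}$. The bi-immune symmetric group $G_{\mathfrak{B}}$ is the subgroup of $\mathrm{Sym}(\mathbb{N})$ generated by $\{\sigma_A : A \text{ bi-immune}\}$. *)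

From Stdlib Require Import Reals List Arith Classical ClassicalEpsilon.
Open Scope R_scope.

(* Untyped syntax acting on argument lists (missing arguments default to 0). *)
Inductive prf : Type :=
| PZero : prf
| PSucc : prf
| PProj : nat -> prf
| PComp : prf -> list prf -> prf
| PPrec : prf -> prf -> prf
| PMu   : prf -> prf.

Inductive peval : prf -> list nat -> nat -> Prop :=
| ev_zero v : peval PZero v 0
| ev_succ v : peval PSucc v (S (hd 0%nat v))
| ev_proj i v : peval (PProj i) v (nth i v 0%nat)
| ev_comp f gs v ws y :
    pevals gs v ws -> peval f ws y -> peval (PComp f gs) v y
| ev_prec0 f g v y : peval f v y -> peval (PPrec f g) (0%nat :: v) y
| ev_precS f g n v r y :
    peval (PPrec f g) (n :: v) r -> peval g (n :: r :: v) y ->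
    peval (PPrec f g) (S n :: v) y
| ev_mu f v n :
    peval f (n :: v) 0%nat ->
    (forall m, (m < n)%nat -> exists k, k <> 0%nat /\ peval f (m :: v) k) ->
    peval (PMu f) v n
with pevals : list prf -> list nat -> list nat -> Prop :=
| evs_nil v : pevals nil v nil
| evs_cons g gs v w ws :
    peval g v w -> pevals gs v ws -> pevals (g :: gs) v (w :: ws).

Definition ce (W : nat -> Prop) : Prop :=
  exists e : prf, forall x, W x <-> exists y, peval e (x :: nil) y.

Definition infinite_set (A : nat -> Prop) : Prop :=
  forall n, exists m, (n <= m)%nat /\ A m.

Definition immune (A : nat -> Prop) : Prop :=
  infinite_set A /\
  ~ (exists W, ce W /\ infinite_set W /\ forall x, W x -> A x).

Definition bi_immune (A : nat -> bool) : Prop :=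
  immune (fun x => A x = true) /\ immune (fun x => A x = false).

Definition swap (i x : nat) : nat :=
  if Nat.eqb x i then S i else if Nat.eqb x (S i) then i else x.

(* partial_comp A m = sigma_(a_0) o sigma_(a_1) o ... o sigma_(a_k)
   where a_0 < ... < a_k enumerate the elements of A below m. *)
Fixpoint partial_comp (A : nat -> bool) (m : nat) : nat -> nat :=
  match m with
  | O => fun x => x
  | S m' => if A m' then (fun x => partial_comp A m' (swap m' x))
            else partial_comp A m'
  end.

Definition is_sigma (A : nat -> bool) (f : nat -> nat) : Prop :=
  forall x, exists N, forall m, (N <= m)%nat -> partial_comp A m x = f x.

Record perm : Type := Perm {
  fw : nat -> nat;
  bw : nat -> nat;
  fw_bw : forall x, fw (bw x) = x;
  bw_fw : forall x, bw (fw x) = x }.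

Inductive GBf : (nat -> nat) -> Prop :=
| GB_id : GBf (fun x => x)
| GB_gen A f : bi_immune A -> is_sigma A f -> GBf f
| GB_comp f g : GBf f -> GBf g -> GBf (fun x => g (f x))
| GB_inv f g : GBf f -> (forall x, f (g x) = x) -> (forall x, g (f x) = x) -> GBf g
| GB_ext f g : GBf f -> (forall x, f x = g x) -> GBf g.

Definition G_B (s : perm) : Prop := GBf (fw s).

Definition least_diff (f g : nat -> nat) : nat :=
  epsilon (inhabits 0%nat)
    (fun j => f j <> g j /\ forall i, (i < j)%nat -> f i = g i).

Definition rho (f g : nat -> nat) : R :=
  if excluded_middle_informative (exists i, f i <> g i)
  then (/ 2) ^ (least_diff f g) else 0.

Definition d (s t : perm) : R := Rmax (rho (fw s) (fw t)) (rho (bw s) (bw t)).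

Definition closed_d (S : perm -> Prop) : Prop :=
  forall s, ~ S s -> exists eps, eps > 0 /\ forall t, d s t < eps -> ~ S t.

From Stdlib Require Import Reals Lra Lia Arith List Classical ClassicalEpsilon Cantor.

(* The backward direction is trivial.  For the forward direction we show that
   G_B is dense, so that being closed forces it to be everything:

   - sigma_A is realised as [sigma A x = partial_comp A (x+1) x]; it is a
     permutation whenever A has infinitely many non-elements.
   - A set A "splits" every infinite c.e. set W if both A and its complement
     meet W infinitely often.  This property is invariant under finite
     modifications and implies bi-immunity.  If A is such a set and B is its
     part above i, then sigma_(B + {i}) = sigma_(i) o sigma_B, so every
     adjacent transposition sigma_(i) lies in G_B.
   - A splitting set exists: enumerating all programs (via a Goedel numbering),
     a stage-wise construction picks two fresh points of the s-th c.e. set,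
     putting the first into A and keeping the second out.
   - Transpositions are products of adjacent ones, and a back-and-forth argument
     with transpositions approximates any permutation and its inverse on any
     initial segment by an element of G_B; hence G_B is d-dense. *)

Local Open Scope nat_scope.

Ltac case_eqb := repeat match goal with
  | |- context [Nat.eqb ?a ?b] => destruct (Nat.eqb_spec a b)
  | H : context [Nat.eqb ?a ?b] |- _ => destruct (Nat.eqb_spec a b)
  end.

Lemma swap_involutive i x : swap i (swap i x) = x.
Proof. unfold swap; case_eqb; lia. Qed.

Lemma swap_outside i x : x < i \/ S i < x -> swap i x = x.
Proof. intro; unfold swap; case_eqb; lia. Qed.

Fixpoint partial_inv (A : nat -> bool) (m : nat) : nat -> nat :=
  match m with
  | O => fun x => x
  | S m' => if A m' then (fun x => swap m' (partial_inv A m' x))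
            else partial_inv A m'
  end.

Lemma partial_comp_inv A m y : partial_comp A m (partial_inv A m y) = y.
Proof.
  revert y; induction m; intro y; simpl; auto.
  destruct (A m); auto. rewrite swap_involutive; auto.
Qed.

Lemma partial_inv_comp A m x : partial_inv A m (partial_comp A m x) = x.
Proof.
  revert x; induction m; intro x; simpl; auto.
  destruct (A m); auto. rewrite IHm, swap_involutive; auto.
Qed.

(* The swaps [sigma_(a)] with [a < m] do not move numbers above [m]. *)
Lemma partial_comp_above A m z : m < z -> partial_comp A m z = z.
Proof.
  induction m; intro H; simpl; auto.
  destruct (A m); [rewrite swap_outside by lia|]; apply IHm; lia.
Qed.

Lemma partial_comp_stable A x m : x < m -> partial_comp A m x = partial_comp A (S x) x.
Proof.
  induction 1; auto. simpl. destruct (A m); auto.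
  rewrite swap_outside by lia; auto.
Qed.

(* sigma_A, defined through the stage at which its limit is reached. *)
Definition sigma (A : nat -> bool) (x : nat) : nat := partial_comp A (S x) x.

Lemma sigma_is_sigma A : is_sigma A (sigma A).
Proof. intro x. exists (S x). intros m Hm. apply partial_comp_stable; auto. Qed.

Lemma sigma_injective A x y : sigma A x = sigma A y -> x = y.
Proof.
  unfold sigma; intro H.
  rewrite <- (partial_comp_stable A x (S x + S y)) in H by lia.
  rewrite <- (partial_comp_stable A y (S x + S y)) in H by lia.
  apply (f_equal (partial_inv A (S x + S y))) in H.
  rewrite !partial_inv_comp in H; auto.
Qed.

(* If [A] has infinitely many non-elements, [sigma_A] is onto: a preimage of [y]
   is computed at any stage [M >= y] with [M] outside [A]. *)
Lemma sigma_surjective A :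
  infinite_set (fun x => A x = false) -> forall y, exists x, sigma A x = y.
Proof.
  intros Hinf y. destruct (Hinf y) as [M [HM HA]].
  set (x := partial_inv A M y). exists x.
  assert (Hx : partial_comp A M x = y) by apply partial_comp_inv.
  assert (x <= M).
  { destruct (le_lt_dec x M); auto. rewrite partial_comp_above in Hx by lia. lia. }
  unfold sigma. rewrite <- (partial_comp_stable A x (S M)) by lia.
  simpl. rewrite HA. auto.
Qed.

Definition sigma_inv (A : nat -> bool) (y : nat) : nat :=
  epsilon (inhabits 0) (fun x => sigma A x = y).

Lemma sigma_sigma_inv A :
  infinite_set (fun x => A x = false) -> forall y, sigma A (sigma_inv A y) = y.
Proof.
  intros Hinf y. apply (epsilon_spec (inhabits 0) (fun x => sigma A x = y)).
  apply sigma_surjective; auto.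
Qed.

Lemma sigma_inv_sigma A x : sigma_inv A (sigma A x) = x.
Proof.
  apply (sigma_injective A).
  apply (epsilon_spec (inhabits 0) (fun z => sigma A z = sigma A x)). eauto.
Qed.

Lemma sigma_in_GB A : bi_immune A -> GBf (sigma A).
Proof. intro H; apply (GB_gen A); auto; apply sigma_is_sigma. Qed.

Lemma sigma_inv_in_GB A : bi_immune A -> GBf (sigma_inv A).
Proof.
  intro H. apply (GB_inv (sigma A)).
  - apply sigma_in_GB; auto.
  - apply sigma_sigma_inv. destruct H as [_ [H _]]; auto.
  - apply sigma_inv_sigma.
Qed.

Lemma partial_comp_empty A m y : (forall z, z < m -> A z = false) -> partial_comp A m y = y.
Proof.
  revert y; induction m; intros y H; simpl; auto.
  rewrite H by lia. apply IHm. intros; apply H; lia.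
Qed.

Definition add_point (A : nat -> bool) (i : nat) (z : nat) : bool := orb (z =? i) (A z).

Lemma partial_comp_add_point A i m x : (forall z, z <= i -> A z = false) -> i < m ->
  partial_comp (add_point A i) m x = swap i (partial_comp A m x).
Proof.
  intros HA Hm. revert x. induction Hm; intro x; simpl; unfold add_point at 1.
  - rewrite Nat.eqb_refl. simpl. rewrite HA by lia.
    rewrite !partial_comp_empty; auto.
    + intros z Hz; apply HA; lia.
    + intros z Hz. unfold add_point. rewrite HA by lia. case_eqb; auto; lia.
  - replace (m =? i) with false by (case_eqb; auto; lia). simpl.
    destruct (A m); auto.
Qed.

Lemma sigma_add_point A i x : (forall z, z <= i -> A z = false) ->
  sigma (add_point A i) x = swap i (sigma A x).
Proof.
  intro HA. unfold sigma.
  rewrite <- (partial_comp_stable (add_point A i) x (S x + S i)) by lia.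
  rewrite <- (partial_comp_stable A x (S x + S i)) by lia.
  apply partial_comp_add_point; auto; lia.
Qed.

Definition splits (A : nat -> bool) (W : nat -> Prop) : Prop :=
  forall N, (exists z, N <= z /\ W z /\ A z = true) /\
            (exists z, N <= z /\ W z /\ A z = false).

(* A set splitting every infinite c.e. set; such sets are bi-immune in a
   robust way, which survives finite modifications. *)
Definition splits_all_ce (A : nat -> bool) : Prop :=
  forall W, ce W -> infinite_set W -> splits A W.

Lemma splits_all_ce_finite_change A A' N :
  splits_all_ce A -> (forall z, N <= z -> A' z = A z) -> splits_all_ce A'.
Proof.
  intros H HA W HW HWi M.
  destruct (H W HW HWi (M + N)) as [[z [Hz [Wz Az]]] [w [Hw [Ww Aw]]]].
  split; [exists z | exists w]; rewrite HA by lia; repeat split; auto; lia.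
Qed.

Lemma ce_full : ce (fun _ => True).
Proof. exists PZero. intro x; split; auto. intros _; exists 0; constructor. Qed.

Lemma infinite_full : infinite_set (fun _ => True).
Proof. intro n; exists n; auto. Qed.

(* Splitting the full set makes [A] and its complement infinite; splitting an
   infinite c.e. [W] prevents [W] from lying inside either of them. *)
Lemma splits_all_ce_bi_immune A : splits_all_ce A -> bi_immune A.
Proof.
  intro H. pose proof (H _ ce_full infinite_full) as Hfull.
  split; split.
  - intro n. destruct (Hfull n) as [[z [Hz [_ Az]]] _]. eauto.
  - intros [W [HW [HWi HWA]]]. destruct (H W HW HWi 0) as [_ [z [_ [Wz Az]]]].
    rewrite (HWA z Wz) in Az. discriminate.
  - intro n. destruct (Hfull n) as [_ [z [Hz [_ Az]]]]. eauto.
  - intros [W [HW [HWi HWA]]]. destruct (H W HW HWi 0) as [[z [_ [Wz Az]]] _].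
    rewrite (HWA z Wz) in Az. discriminate.
Qed.

(* Key step: with [B] the part of a splitting set [A] above [i],
   [sigma_(i) = sigma_(B + {i}) o sigma_B^-1], a product of generators. *)
Lemma swap_in_GB A : splits_all_ce A -> forall i, GBf (swap i).
Proof.
  intros HA i.
  set (B := fun z => andb (i <? z) (A z)).
  assert (HB : forall z, z <= i -> B z = false).
  { intros z Hz; unfold B. replace (i <? z) with false; auto.
    symmetry; apply Nat.ltb_ge; lia. }
  assert (HB_bi : bi_immune B).
  { apply splits_all_ce_bi_immune, (splits_all_ce_finite_change A B (S i)); auto.
    intros z Hz; unfold B. replace (i <? z) with true; auto.
    symmetry; apply Nat.ltb_lt; lia. }
  assert (HBi_bi : bi_immune (add_point B i)).
  { apply splits_all_ce_bi_immune, (splits_all_ce_finite_change A _ (S i)); auto.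
    intros z Hz; unfold add_point, B.
    replace (i <? z) with true by (symmetry; apply Nat.ltb_lt; lia).
    replace (z =? i) with false by (case_eqb; auto; lia). auto. }
  apply (GB_ext (fun y => sigma (add_point B i) (sigma_inv B y))).
  - apply GB_comp; [apply sigma_inv_in_GB | apply sigma_in_GB]; auto.
  - intro y. rewrite sigma_add_point, sigma_sigma_inv; auto.
    destruct HB_bi as [_ [HB_co _]]; auto.
Qed.

Section SplittingFamily.

(* A countable family of sets; we build one set splitting each infinite [V s]
   above [s], by a stage-wise construction. *)
Variable V : nat -> nat -> Prop.

(* A point of [V s] above [b] when [V s] is infinite, and some point above [b] otherwise. *)
Definition next_point (s b : nat) : nat :=
  epsilon (inhabits 0) (fun x => b < x /\ (infinite_set (V s) -> V s x)).

Lemma next_point_spec s b :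
  b < next_point s b /\ (infinite_set (V s) -> V s (next_point s b)).
Proof.
  apply (epsilon_spec (inhabits 0) (fun x => b < x /\ (infinite_set (V s) -> V s x))).
  destruct (classic (infinite_set (V s))) as [Hi|Hi].
  - destruct (Hi (S b)) as [x [Hx Vx]]. exists x; split; auto; lia.
  - exists (S b). split; [lia | contradiction].
Qed.

(* Stage [s] starts above [bound s], puts the point [chosen s] of [V s] into the
   set and keeps the next point [bound (S s)] of [V s] out of it. *)
Fixpoint bound (s : nat) : nat :=
  match s with
  | O => 0
  | S s' => next_point s' (next_point s' (bound s'))
  end.

Definition chosen (s : nat) : nat := next_point s (bound s).

Definition splitter (z : nat) : bool :=
  if excluded_middle_informative (exists s, chosen s = z) then true else false.

Lemma bound_chosen s : bound s < chosen s < bound (S s).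
Proof.
  unfold chosen; simpl.
  pose proof (proj1 (next_point_spec s (bound s))).
  pose proof (proj1 (next_point_spec s (next_point s (bound s)))). lia.
Qed.

Lemma bound_monotone s t : s <= t -> bound s <= bound t.
Proof. induction 1; auto. pose proof (bound_chosen m). lia. Qed.

Lemma bound_above s : s <= bound s.
Proof. induction s; simpl; auto. pose proof (bound_chosen s). simpl in *. lia. Qed.

Lemma splitter_chosen s : splitter (chosen s) = true.
Proof.
  unfold splitter. destruct (excluded_middle_informative _) as [|Hn]; auto.
  exfalso; eauto.
Qed.

(* The points kept out lie strictly between the chosen points. *)
Lemma splitter_bound s : splitter (bound (S s)) = false.
Proof.
  unfold splitter. destruct (excluded_middle_informative _) as [[t Ht]|]; auto.
  exfalso. pose proof (bound_chosen t). destruct (le_lt_dec t s).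
  - pose proof (bound_monotone (S t) (S s)). lia.
  - pose proof (bound_monotone (S s) t). lia.
Qed.

Lemma splitter_splits s : infinite_set (V s) ->
  (exists z, s <= z /\ V s z /\ splitter z = true) /\
  (exists z, s <= z /\ V s z /\ splitter z = false).
Proof.
  intro Hi. pose proof (bound_above s). pose proof (bound_chosen s). split.
  - exists (chosen s). split; [lia|]. split; [apply next_point_spec; auto | apply splitter_chosen].
  - exists (bound (S s)). split; [lia|]. split; [|apply splitter_bound].
    apply next_point_spec; auto.
Qed.

End SplittingFamily.

Section PrfNestedInduction.

(* Induction over programs with a hypothesis for every argument of [PComp];
   the automatically generated principle omits the list [gs]. *)
Variable P : prf -> Prop.
Hypothesis P_zero : P PZero.
Hypothesis P_succ : P PSucc.
Hypothesis P_proj : forall i, P (PProj i).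
Hypothesis P_comp : forall f gs, P f -> Forall P gs -> P (PComp f gs).
Hypothesis P_prec : forall f g, P f -> P g -> P (PPrec f g).
Hypothesis P_mu : forall f, P f -> P (PMu f).

Fixpoint prf_nested_ind (p : prf) : P p :=
  match p with
  | PZero => P_zero
  | PSucc => P_succ
  | PProj i => P_proj i
  | PComp f gs => P_comp f gs (prf_nested_ind f)
      ((fix all (l : list prf) : Forall P l :=
          match l with
          | nil => Forall_nil P
          | g :: l' => Forall_cons g (prf_nested_ind g) (all l')
          end) gs)
  | PPrec f g => P_prec f g (prf_nested_ind f) (prf_nested_ind g)
  | PMu f => P_mu f (prf_nested_ind f)
  end.

End PrfNestedInduction.

Definition pair_code (a b : nat) : nat := to_nat (a, b).
Arguments pair_code : simpl never.

Lemma pair_code_injective a b c e : pair_code a b = pair_code c e -> a = c /\ b = e.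
Proof.
  unfold pair_code; intro H. apply (f_equal of_nat) in H.
  rewrite !cancel_of_to in H. injection H; auto.
Qed.

Fixpoint encode (p : prf) : nat :=
  match p with
  | PZero => pair_code 0 0
  | PSucc => pair_code 1 0
  | PProj i => pair_code 2 i
  | PComp f gs => pair_code 3 (pair_code (encode f)
      ((fix encode_list (l : list prf) : nat :=
          match l with
          | nil => 0
          | g :: l' => S (pair_code (encode g) (encode_list l'))
          end) gs))
  | PPrec f g => pair_code 4 (pair_code (encode f) (encode g))
  | PMu f => pair_code 5 (encode f)
  end.

Fixpoint encode_list (l : list prf) : nat :=
  match l with
  | nil => 0
  | g :: l' => S (pair_code (encode g) (encode_list l'))
  end.

Lemma encode_comp f gs : encode (PComp f gs) = pair_code 3 (pair_code (encode f) (encode_list gs)).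
Proof. reflexivity. Qed.

Lemma encode_list_injective gs : Forall (fun g => forall q, encode g = encode q -> g = q) gs ->
  forall l, encode_list gs = encode_list l -> gs = l.
Proof.
  induction 1 as [|g gs Hg Hgs IH]; intros [|g' l] E; simpl in E; try discriminate; auto.
  injection E as E. apply pair_code_injective in E as [E1 E2]. f_equal; auto.
Qed.

Lemma encode_injective p q : encode p = encode q -> p = q.
Proof.
  revert q. induction p using prf_nested_ind; intros q E; destruct q;
    rewrite ?encode_comp in E; simpl in E;
    apply pair_code_injective in E as [E1 E2]; try discriminate; auto.
  - apply pair_code_injective in E2 as [E2 E3].
    f_equal; [auto | apply encode_list_injective; auto].
  - apply pair_code_injective in E2 as [E2 E3]. f_equal; auto.
  - f_equal; auto.
Qed.

Lemma program_enumeration :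
  exists prog : nat -> prf, forall e N, exists s, N <= s /\ prog s = e.
Proof.
  exists (fun s => epsilon (inhabits PZero) (fun p => encode p = fst (of_nat s))).
  intros e N. exists (pair_code (encode e) N). split.
  - unfold pair_code. pose proof (to_nat_non_decreasing (encode e) N). lia.
  - assert (Hcode : fst (of_nat (pair_code (encode e) N)) = encode e)
      by (unfold pair_code; rewrite cancel_of_to; reflexivity).
    apply encode_injective. transitivity (fst (of_nat (pair_code (encode e) N))); auto.
    apply (epsilon_spec (inhabits PZero) (fun p => encode p = _)).
    exists e; auto.
Qed.

(* Splitting the enumerated family of all c.e. sets yields a set splitting
   every infinite c.e. set. *)
Lemma splits_all_ce_exists : exists A, splits_all_ce A.
Proof.
  destruct program_enumeration as [prog Hprog].
  set (V := fun s x => exists y, peval (prog s) (x :: nil) y).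
  exists (splitter V). intros W [e He] HWi N.
  destruct (Hprog e N) as [s [Hs Hse]].
  assert (HVW : forall x, V s x <-> W x) by (intro x; unfold V; rewrite Hse, He; tauto).
  assert (HVi : infinite_set (V s)).
  { intro n. destruct (HWi n) as [m [Hm Wm]]. exists m. rewrite HVW; auto. }
  destruct (splitter_splits V s HVi) as [[z [Hz [Vz Az]]] [w [Hw [Vw Aw]]]].
  split; [exists z | exists w]; rewrite <- HVW; repeat split; auto; lia.
Qed.

Definition transp (a b x : nat) : nat :=
  if x =? a then b else if x =? b then a else x.

Lemma transp_involutive a b x : transp a b (transp a b x) = x.
Proof. unfold transp; case_eqb; lia. Qed.

Lemma transp_left a b : transp a b a = b.
Proof. unfold transp; case_eqb; lia. Qed.

Lemma transp_fixes a b x : (x = a -> x = b) -> (x = b -> x = a) -> transp a b x = x.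
Proof. intros Ha Hb; unfold transp; case_eqb; subst; auto; lia. Qed.

Definition inverse_pair (p q : nat -> nat) : Prop :=
  (forall x, p (q x) = x) /\ (forall x, q (p x) = x).

Definition agree_below (f g : nat -> nat) (k : nat) : Prop :=
  forall i, i < k -> f i = g i.

(* One step of the back-and-forth approximation of a permutation [f] (with
   inverse [g]) by [p] (with inverse [q]): post-composing with the
   transposition of [p k] and [f k] makes [p] agree with [f] at [k] as well,
   and keeps every agreement of [q] with [g]. *)
Lemma extend_forward p q f g k m :
  inverse_pair p q -> inverse_pair f g -> agree_below p f k -> agree_below q g m ->
  inverse_pair (fun x => transp (p k) (f k) (p x)) (fun x => q (transp (p k) (f k) x)) /\
  agree_below (fun x => transp (p k) (f k) (p x)) f (S k) /\
  agree_below (fun x => q (transp (p k) (f k) x)) g m.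
Proof.
  intros [Hpq Hqp] [Hfg Hgf] Hpf Hqg. split; [|split].
  - split; intro x; [rewrite Hpq, transp_involutive | rewrite transp_involutive, Hqp]; auto.
  - intros i Hi. destruct (Nat.eq_dec i k) as [->|Hik]; [apply transp_left|].
    rewrite (Hpf i) by lia. apply transp_fixes; intro E; exfalso.
    + rewrite <- (Hpf i) in E by lia. apply (f_equal q) in E. rewrite !Hqp in E. lia.
    + apply (f_equal g) in E. rewrite !Hgf in E. lia.
  - intros i Hi. rewrite transp_fixes; auto; intro E.
    + assert (Hk : g i = k) by (rewrite <- Hqg, E, Hqp; auto).
      rewrite <- Hk, Hfg; auto.
    + assert (Hk : q i = k) by (rewrite Hqg, E, Hgf; auto).
      rewrite <- Hk, Hpq; auto.
Qed.

Section FinitaryPermutations.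

Hypothesis swap_GB : forall i, GBf (swap i).

(* [transp a (a+n+2)] is [transp a (a+n+1)] conjugated by the adjacent swap at [a+n+1]. *)
Lemma transp_GB_above a n : GBf (transp a (S a + n)).
Proof.
  induction n.
  - apply (GB_ext (swap a)); auto. intro x; unfold transp, swap; case_eqb; lia.
  - apply (GB_ext (fun x => swap (S a + n) (transp a (S a + n) (swap (S a + n) x)))).
    + apply GB_comp; [apply GB_comp|]; auto.
    + intro x. unfold transp, swap. case_eqb; lia.
Qed.

Lemma transp_GB a b : GBf (transp a b).
Proof.
  destruct (lt_eq_lt_dec a b) as [[H|H]|H].
  - replace b with (S a + (b - S a)) by lia. apply transp_GB_above.
  - apply (GB_ext (fun x => x)); [constructor|]. intro x; unfold transp; case_eqb; lia.
  - apply (GB_ext (transp b a)).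
    + replace a with (S b + (a - S b)) by lia. apply transp_GB_above.
    + intro x; unfold transp; case_eqb; lia.
Qed.

Lemma finitary_approximation (s : perm) k : exists p q,
  GBf p /\ inverse_pair p q /\ agree_below p (fw s) k /\ agree_below q (bw s) k.
Proof.
  assert (Hs : inverse_pair (fw s) (bw s)) by (split; [apply fw_bw | apply bw_fw]).
  induction k as [|k IH].
  - exists (fun x => x), (fun x => x).
    repeat split; [constructor | | ]; intros i Hi; lia.
  - destruct IH as [p [q [Gp [Hpq [Hp Hq]]]]].
    destruct (extend_forward p q (fw s) (bw s) k k Hpq Hs Hp Hq)
      as [[Hp1q1 Hq1p1] [Hp1 Hq1]].
    set (p1 := fun x => transp (p k) (fw s k) (p x)) in *.
    set (q1 := fun x => q (transp (p k) (fw s k) x)) in *.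
    (* The same step with the roles of a permutation and its inverse exchanged. *)
    assert (Hs' : inverse_pair (bw s) (fw s)) by (split; apply Hs).
    destruct (extend_forward q1 p1 (bw s) (fw s) k (S k) (conj Hq1p1 Hp1q1) Hs' Hq1 Hp1)
      as [[Hq2p2 Hp2q2] [Hq2 Hp2]].
    exists (fun x => p1 (transp (q1 k) (bw s k) x)), (fun x => transp (q1 k) (bw s k) (q1 x)).
    repeat split; auto.
    apply (GB_comp _ p1); [apply transp_GB|].
    apply (GB_comp p); [exact Gp | apply transp_GB].
Qed.

End FinitaryPermutations.

(* The least index where two functions differ exists as soon as they differ;
   this is what [least_diff] chooses. *)
Lemma least_difference (f g : nat -> nat) i : f i <> g i ->
  exists j, f j <> g j /\ forall i, i < j -> f i = g i.
Proof.
  intro Hi.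
  assert (Hdec : forall j, {f j <> g j} + {~ f j <> g j}).
  { intro j. destruct (Nat.eq_dec (f j) (g j)); [right | left]; auto. }
  destruct (ConstructiveEpsilon.epsilon_smallest _ Hdec (ex_intro _ i Hi)) as [j [Hj Hmin]].
  exists j. split; auto. intros i' Hi'.
  destruct (Nat.eq_dec (f i') (g i')) as [|Hne]; auto. specialize (Hmin i' Hne). lia.
Qed.

Lemma pow_half_antitone j n : n <= j -> ((/ 2) ^ j <= (/ 2) ^ n)%R.
Proof.
  intro H. rewrite !pow_inv. apply Rinv_le_contravar.
  - apply pow_lt; lra.
  - apply Rle_pow; lra || lia.
Qed.

Lemma rho_agree_below f g n : agree_below f g n -> (rho f g <= (/ 2) ^ n)%R.
Proof.
  intro H. unfold rho. destruct (excluded_middle_informative _) as [[i Hi]|].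
  - unfold least_diff.
    destruct (epsilon_spec (inhabits 0)
      (fun j => f j <> g j /\ forall i, i < j -> f i = g i) (least_difference f g i Hi))
      as [Hj _].
    apply pow_half_antitone.
    destruct (le_lt_dec n (epsilon (inhabits 0)
      (fun j => f j <> g j /\ forall i, i < j -> f i = g i))) as [|Hlt]; auto.
    exfalso; apply Hj, H; auto.
  - apply pow_le; lra.
Qed.

Definition dense_d (S : perm -> Prop) : Prop :=
  forall s eps, (eps > 0)%R -> exists t, S t /\ (d s t < eps)%R.

Lemma closed_dense_full (S : perm -> Prop) : closed_d S -> dense_d S -> forall s, S s.
Proof.
  intros Hc Hd s. destruct (classic (S s)) as [|Hn]; auto.
  destruct (Hc s Hn) as [eps [He Ht]].
  destruct (Hd s eps He) as [t [St Hdt]]. exfalso. apply (Ht t Hdt St).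
Qed.

Lemma G_B_dense : (forall i, GBf (swap i)) -> dense_d G_B.
Proof.
  intros Hswap s eps He.
  destruct (pow_lt_1_zero (/ 2) ltac:(rewrite Rabs_pos_eq; lra) eps He) as [N HN].
  destruct (finitary_approximation Hswap s N) as [p [q [Gp [[Hpq Hqp] [Hp Hq]]]]].
  exists (Perm p q Hpq Hqp). split; [exact Gp|].
  assert (Hsmall : ((/ 2) ^ N < eps)%R).
  { specialize (HN N (le_n N)). rewrite Rabs_pos_eq in HN; auto. apply pow_le; lra. }
  unfold d; simpl. apply (Rle_lt_trans _ ((/ 2) ^ N)); auto.
  apply Rmax_lub; apply rho_agree_below; intros i Hi; symmetry; auto.
Qed.

Theorem mainTheorem9 : closed_d G_B <-> (forall s : perm, G_B s).
Proof.
  split.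
  - intro Hclosed. apply closed_dense_full; auto.
    destruct splits_all_ce_exists as [A HA].
    apply G_B_dense, (swap_in_GB A HA).
  - intros Hall s Hs. exfalso. apply Hs, Hall.
Qed.
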